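(* If $T\in\mathcal{T}_3$ has $n$ vertices then $\mu(T)<\frac{3n-2}{4}$.
   Context: A leaf is a vertex of degree at most 1; an internal vertex has degree at least 2. $\mathcal{T}_3$ is the set of finite trees with at least one internal vertex in which every internal vertex has degree at least 3. A subtree of $T$ is a nonempty vertex set inducing a connected subgraph; $\mu(T)$ is the average number of vertices over all subtrees of $T$. *)

From mathcomp Require Import all_boot all_order all_algebra.
Set Implicit Arguments. Unset Strict Implicit. Unset Printing Implicit Defensive.
Import Order.TTheory GRing.Theory Num.Theory.

Definition simple_graph (T : finType) (e : rel T) : Prop :=
  symmetric e /\ irreflexive e.

(* Number of (undirected) edges: ordered adjacent pairs counted twice. *)
Definition n_edges (T : finType) (e : rel T) : nat :=
  #|[set p : T * T | e p.1 p.2]| %/ 2.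

Definition is_tree (T : finType) (e : rel T) : Prop :=
  [/\ simple_graph e, 0 < #|T|, (forall x y : T, connect e x y)
    & n_edges e = #|T| - 1].

Definition deg (T : finType) (e : rel T) (x : T) : nat := #|[set y | e x y]|.

(* Internal vertex: degree at least 2; leaf: degree at most 1. *)
Definition internal (T : finType) (e : rel T) (x : T) : bool := 1 < deg e x.

Definition in_T3 (T : finType) (e : rel T) : Prop :=
  [/\ is_tree e, (exists x, internal e x)
    & forall x, internal e x -> 2 < deg e x].

Definition induced (T : finType) (e : rel T) (S : {set T}) : rel T :=
  [rel x y | [&& x \in S, y \in S & e x y]].

Definition is_subtree (T : finType) (e : rel T) (S : {set T}) : bool :=
  (S != set0) && [forall x in S, forall y in S, connect (induced e S) x y].

Definition subtrees (T : finType) (e : rel T) : {set {set T}} :=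
  [set S | is_subtree e S].

Definition mu (T : finType) (e : rel T) : rat :=
  (\sum_(S in subtrees e) #|S|)%:R / (#|subtrees e|)%:R.

From mathcomp Require Import all_boot all_order all_algebra zify lra.
Set Implicit Arguments. Unset Strict Implicit. Unset Printing Implicit Defensive.
Import Order.TTheory GRing.Theory Num.Theory.

(* Let C be the set of internal vertices of a subtree S. If C is nonempty,
   the leaves of S are exactly some of the leaves adjacent to C, and replacing
   them by the complementary set of adjacent leaves gives another subtree S'
   with the same C; this is an involution on subtrees (the identity on the
   subtrees without internal vertex, which are single vertices).  Since the
   leaves of S and of S' are disjoint, |S| + |S'| <= 2 i + l, where i and l
   count internal vertices and leaves of T.  The degree condition of T_3 and
   the handshake lemma give l >= i + 2, hence 2 i + l <= (3n - 2)/2.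
   Averaging over the involution gives mu <= (3n - 2)/4, and a single leaf,
   a fixed point of size 1, makes the inequality strict. *)

Lemma big_involution_double (I : finType) (A : {pred I}) (f : I -> I)
    (w : I -> nat) :
  involutive f -> (forall x, (f x \in A) = (x \in A)) ->
  (\sum_(x in A) w x).*2 = \sum_(x in A) (w x + w (f x)).
Proof.
move=> fK fA; rewrite big_split -addnn /=; congr (_ + _).
by rewrite (reindex_inj (inv_inj fK)); apply: eq_bigl => x; rewrite fA.
Qed.

Lemma ltn_sum_at (I : finType) (A : {pred I}) (F G : I -> nat) (a : I) :
  a \in A -> F a < G a -> (forall x, x \in A -> F x <= G x) ->
  \sum_(x in A) F x < \sum_(x in A) G x.
Proof.
move=> Aa lt_a le_FG; rewrite (bigD1 a) //= [X in _ < X](bigD1 a) //= -addSn.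
by apply: leq_add => //; apply: leq_sum => x /andP[/le_FG].
Qed.

Section Degrees.

Variables (T : finType) (e : rel T).

Definition arcs : {set T * T} := [set p | e p.1 p.2].

Lemma card_arcs : #|arcs| = \sum_x deg e x.
Proof.
rewrite -sum1_card (eq_bigl (fun p : T * T => predT p.1 && e p.1 p.2)).
  rewrite -(pair_big_dep predT (fun x y => e x y) (fun _ _ => 1)) /=.
  by apply: eq_bigr => x _; rewrite /deg -sum1_card; apply: eq_bigl => y; rewrite inE.
by move=> p; rewrite !inE.
Qed.

(* Arcs split into those going up and those going down in the enumeration
   order of T; reversal exchanges the two halves. *)
Lemma card_arcs_even : simple_graph e -> ~~ odd #|arcs|.
Proof.
case=> sym_e irr_e.
pose up := [set p : T * T | enum_rank p.1 < enum_rank p.2].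
have down_arcs : arcs :\: up = (fun p : T * T => (p.2, p.1)) @: (arcs :&: up).
  apply/setP => -[x y]; rewrite !inE /=; apply/idP/imsetP.
  - case/andP=> not_up exy; exists (y, x) => //; rewrite !inE /= sym_e exy /=.
    have neq_xy : enum_rank x != enum_rank y.
      by rewrite (inj_eq enum_rank_inj); apply: contraTneq exy => ->; rewrite irr_e.
    by move: neq_xy; rewrite neq_ltn (negbTE not_up).
  - case=> -[a b]; rewrite !inE /= => /andP[eab lt_ab] [-> ->].
    by rewrite sym_e eab andbT -leqNgt ltnW.
have swap_inj : injective (fun p : T * T => (p.2, p.1)) by move=> [a b] [c d] [-> ->].
by rewrite -(cardsID up arcs) down_arcs card_imset // addnn odd_double.
Qed.

Lemma tree_sum_deg : is_tree e -> \sum_x deg e x = (#|T| - 1).*2.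
Proof.
case=> simple_e _ _; rewrite /n_edges -/arcs -card_arcs => <-.
by rewrite -[LHS](odd_double_half #|arcs|) (negbTE (card_arcs_even simple_e)) divn2.
Qed.

Lemma connect_deg_gt0 (x y : T) : connect e x y -> x != y -> 0 < deg e x.
Proof.
case/connectP=> -[|z p] /= path_xp ->; first by rewrite eqxx.
by case/andP: path_xp => exz _ _; apply/card_gt0P; exists z; rewrite inE.
Qed.

End Degrees.

Section Leaves.

Variables (T : finType) (e : rel T).

Definition internals : {set T} := [set x | internal e x].

Lemma leaf_neighbor_uniq (w u v : T) :
  ~~ internal e w -> e w u -> e w v -> u = v.
Proof.
rewrite /internal /deg -leqNgt => /card_le1_eqP le1 ewu ewv.
by apply: le1; rewrite inE.
Qed.

Lemma T3_leaves_internals :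
  in_T3 e -> 0 < #|internals| /\ #|internals| + 2 <= #|~: internals|.
Proof.
case=> tree_e [y int_y] T3_deg; have [_ _ conn_e _] := tree_e.
have int_gt0 : 0 < #|internals| by apply/card_gt0P; exists y; rewrite inE.
have deg_int : #|internals| * 3 <= \sum_(x | internal e x) deg e x.
  rewrite -sum_nat_const (eq_bigl (internal e)) => [|x]; last by rewrite inE.
  exact: leq_sum.
have deg_leaf : #|~: internals| * 1 <= \sum_(x | ~~ internal e x) deg e x.
  rewrite -sum_nat_const (eq_bigl (predC (internal e))) => [|x]; last by rewrite !inE.
  apply: leq_sum => x leaf_x; apply: (connect_deg_gt0 (conn_e x y)).
  by apply: contraNneq leaf_x => ->.
have sum_deg : \sum_(x | internal e x) deg e x + \sum_(x | ~~ internal e x) deg e x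
                = 2 * (#|T| - 1).
  by rewrite mul2n -(tree_sum_deg tree_e) [RHS](bigID (internal e)).
have := cardsC internals; split => //; lia.
Qed.

(* Two adjacent leaves form a connected component, so they would be the
   whole tree. *)
Lemma leaves_not_adjacent {y x z : T} :
  symmetric e -> (forall a b, connect e a b) -> internal e y ->
  ~~ internal e x -> ~~ internal e z -> ~~ e x z.
Proof.
move=> sym_e conn_e int_y leaf_x leaf_z; apply/negP => exz.
pose xz := [pred w | (w == x) || (w == z)].
have xz_out : forall u v, e u v -> u \in xz -> v \in xz.
  move=> u v euv; rewrite !inE => /orP[] /eqP eq_u; subst u.
    by rewrite (leaf_neighbor_uniq leaf_x euv exz) eqxx orbT.
  by rewrite (leaf_neighbor_uniq leaf_z euv (etrans (sym_e z x) exz)) eqxx.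
have xz_closed : closed e xz.
  by move=> u v euv; apply/idP/idP; apply: xz_out; rewrite // sym_e.
have := closed_connect xz_closed (conn_e x y); rewrite !inE eqxx /=.
by case/esym/orP=> /eqP eq_y; [move: leaf_x | move: leaf_z]; rewrite -eq_y int_y.
Qed.

End Leaves.

Section LeafSwap.

Variables (T : finType) (e : rel T).
Hypothesis sym_e : symmetric e.

Definition core (S : {set T}) : {set T} := S :&: internals e.

Definition fringe (C : {set T}) : {set T} :=
  [set l | ~~ internal e l & [exists c in C, e c l]].

Definition leaf_swap (S : {set T}) : {set T} :=
  if core S == set0 then S else core S :|: (fringe (core S) :\: S).

(* Along a path inside S, a leaf can only be entered last, so every vertex
   reached from an internal vertex of S is internal and reached within the
   core, or a leaf hanging from such a vertex. *)
Lemma induced_path_core (S : {set T}) (y : T) (p : seq T) :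
  y \in S -> internal e y -> path (induced e S) y p ->
  exists2 a, a \in core S & connect (induced e (core S)) y a /\
    (last y p = a \/ ~~ internal e (last y p) /\ e a (last y p)).
Proof.
move=> yS int_y; elim/last_ind: p => [|p z IHp].
  by move=> _; exists y; [rewrite inE yS inE | split; [apply: connect0 | left]].
rewrite rcons_path last_rcons => /andP[/IHp[a a_core [y_a last_a]]] /=.
case/and3P=> wS zS ewz; have [aS int_a] : a \in S /\ internal e a.
  by move: a_core; rewrite !inE => /andP[].
case: last_a => [w_a | [leaf_w e_aw]].
- case int_z: (internal e z); last by exists a => //; split; [|right; rewrite -w_a].
  exists z; first by rewrite !inE zS int_z.
  split; last by left.
  apply: (connect_trans y_a); apply: connect1.
  by rewrite /induced /= !inE aS int_a zS int_z -w_a ewz.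
- have -> : z = a by apply: (leaf_neighbor_uniq leaf_w ewz); rewrite sym_e.
  by exists a => //; split; last left.
Qed.

Lemma subtree_core_connect (S : {set T}) (u v : T) :
  is_subtree e S -> u \in core S -> v \in core S ->
  connect (induced e (core S)) u v.
Proof.
case/andP=> _ /forall_inP conn_S; rewrite !inE => /andP[uS int_u] /andP[vS int_v].
have /connectP[p path_p v_last] := forall_inP (conn_S u uS) v vS.
have [a _ [u_a [last_a | [leaf_v _]]]] := induced_path_core uS int_u path_p.
  by rewrite v_last last_a.
by rewrite -v_last int_v in leaf_v.
Qed.

Lemma subtree_leaf_in_fringe (S : {set T}) (x : T) :
  is_subtree e S -> core S != set0 -> x \in S -> ~~ internal e x ->
  x \in fringe (core S).
Proof.
case/andP=> _ /forall_inP conn_S /set0Pn[y]; rewrite !inE => /andP[yS int_y] xS leaf_x.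
have /connectP[p path_p x_last] := forall_inP (conn_S y yS) x xS.
have [a a_core [_ [last_a | [_ e_ax]]]] := induced_path_core yS int_y path_p.
  by rewrite x_last last_a in leaf_x; move: a_core; rewrite !inE (negbTE leaf_x) andbF.
by rewrite leaf_x; apply/exists_inP; exists a; rewrite // x_last.
Qed.

Lemma core_fringe_subtree (C X : {set T}) :
  C != set0 -> (forall u v, u \in C -> v \in C -> connect (induced e C) u v) ->
  X \subset fringe C -> is_subtree e (C :|: X).
Proof.
move=> /set0Pn[c0 c0C] conn_C X_fringe; apply/andP; split.
  by apply/set0Pn; exists c0; rewrite inE c0C.
have conn_CX : forall u v, u \in C -> v \in C -> connect (induced e (C :|: X)) u v.
  move=> u v uC vC; apply: connect_sub (conn_C u v uC vC) => a b /and3P[aC bC eab].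
  by apply: connect1; rewrite /induced /= !inE aC bC eab.
have near_C : forall u, u \in C :|: X -> exists2 c, c \in C &
    connect (induced e (C :|: X)) u c /\ connect (induced e (C :|: X)) c u.
  move=> u; rewrite inE => /orP[uC | uX]; first by exists u => //; split; apply: connect0.
  have /[!inE] /andP[_ /exists_inP[c cC ecu]] := subsetP X_fringe u uX.
  by exists c => //; split; apply: connect1; rewrite /induced /= !inE cC uX ?orbT // sym_e.
apply/forall_inP => u uCX; apply/forall_inP => v vCX.
have [c cC [u_c _]] := near_C u uCX; have [d dC [_ d_v]] := near_C v vCX.
exact: connect_trans u_c (connect_trans (conn_CX c d cC dC) d_v).
Qed.

Lemma core_union_fringe (S : {set T}) :
  core (core S :|: (fringe (core S) :\: S)) = core S.
Proof.
apply/setP=> x; rewrite !inE.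
by case: (internal e x); rewrite /= ?andbF ?andbT ?orbF.
Qed.

Lemma leaf_swap_subtree (S : {set T}) :
  is_subtree e S -> is_subtree e (leaf_swap S).
Proof.
rewrite /leaf_swap; case: eqP => // /eqP core_S subtree_S.
apply: core_fringe_subtree => //; first by move=> u v; apply: subtree_core_connect.
by apply/subsetP => x /[!inE] /andP[_ ->].
Qed.

Lemma leaf_swapK (S : {set T}) : is_subtree e S -> leaf_swap (leaf_swap S) = S.
Proof.
move=> subtree_S; have [core0 | core_S] := eqVneq (core S) set0.
  by rewrite /leaf_swap core0 eqxx core0 eqxx.
rewrite {2}/leaf_swap (negbTE core_S) /leaf_swap core_union_fringe (negbTE core_S).
apply/setP => x.
have := @subtree_leaf_in_fringe S x subtree_S core_S; rewrite !inE.
by case: (x \in S); case: (internal e x) => //=; [move/(_ isT isT) | rewrite andNb].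
Qed.

Lemma card_leaf_swap (S : {set T}) : core S != set0 ->
  #|S| + #|leaf_swap S| <= #|internals e|.*2 + #|~: internals e|.
Proof.
rewrite /leaf_swap => /negbTE ->.
have leaves_disjoint : (S :\: internals e) :&: (fringe (core S) :\: S) = set0.
  by apply/setP => x; rewrite !inE; case: (x \in S); rewrite ?andbF.
have leaves_sub : (S :\: internals e) :|: (fringe (core S) :\: S) \subset ~: internals e.
  by apply/subsetP => x; rewrite !inE => /orP[] /andP[] // _ /andP[].
have core_sub : core S \subset internals e by apply: subsetIr.
have := subset_leq_card leaves_sub; rewrite cardsU leaves_disjoint cards0 subn0.
have := subset_leq_card core_sub; have := cardsID (internals e) S.
have := cardsU (core S) (fringe (core S) :\: S); rewrite /core -!mul2n; lia.
Qed.

Lemma subtree_core0_card (y : T) (S : {set T}) :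
  (forall a b, connect e a b) -> internal e y ->
  is_subtree e S -> core S = set0 -> #|S| <= 1.
Proof.
move=> conn_e int_y /andP[_ /forall_inP conn_S] core0.
have leaf_S : forall u, u \in S -> ~~ internal e u.
  move=> u uS; apply: contra_eqN core0 => int_u.
  by apply/set0Pn; exists u; rewrite !inE uS.
apply/card_le1_eqP => x z xS zS; apply/eqP; apply: contraT => neq_xz.
have /connectP[[|w p] /=] := forall_inP (conn_S x xS) z zS.
  by move=> _ eq_zx; rewrite eq_zx eqxx in neq_xz.
case/andP=> /and3P[_ wS exw] _ _.
have := leaves_not_adjacent sym_e conn_e int_y (leaf_S x xS) (leaf_S w wS).
by rewrite exw.
Qed.

Definition subtree_swap (S : {set T}) : {set T} :=
  if is_subtree e S then leaf_swap S else S.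

Lemma subtree_swapK : involutive subtree_swap.
Proof.
move=> S; rewrite {2}/subtree_swap; case: ifP => subtree_S; rewrite /subtree_swap.
  by rewrite leaf_swap_subtree // leaf_swapK.
by rewrite subtree_S.
Qed.

Lemma subtree_swap_subtrees (S : {set T}) :
  (subtree_swap S \in subtrees e) = (S \in subtrees e).
Proof.
by rewrite !inE /subtree_swap; case: ifP => // subtree_S; rewrite leaf_swap_subtree.
Qed.

End LeafSwap.

Section T3.

Variables (T : finType) (e : rel T).
Hypothesis T3_e : in_T3 e.

Lemma leaf_swap_card_bound (S : {set T}) :
  is_subtree e S -> 2 * (#|S| + #|leaf_swap e S|) + 2 <= 3 * #|T|.
Proof.
move=> subtree_S; have [_ leaves_ge] := T3_leaves_internals T3_e.
have := cardsC (internals e); case: T3_e => -[[sym_e _] _ conn_e _] [y int_y] _.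
have [core0 | core_S] := eqVneq (core e S) set0.
  have := subtree_core0_card sym_e conn_e int_y subtree_S core0.
  by rewrite /leaf_swap core0 eqxx; lia.
by have := card_leaf_swap core_S; rewrite -mul2n; lia.
Qed.

Lemma subtree_sizes_lt :
  4 * \sum_(S in subtrees e) #|S| + 2 * #|subtrees e| < #|subtrees e| * (3 * #|T|).
Proof.
have [int_gt0 leaves_ge] := T3_leaves_internals T3_e.
have [[[sym_e _] _ _ _] _ _] := T3_e.
have [x leaf_x] : exists x, x \in ~: internals e by apply/card_gt0P; lia.
have leaf_subtree : is_subtree e [set x].
  apply/andP; split; first by apply/set0Pn; exists x; rewrite inE.
  by apply/forall_inP => u /set1P ->; apply/forall_inP => v /set1P ->; apply: connect0.
have swap_leaf : subtree_swap e [set x] = [set x].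
  rewrite /subtree_swap leaf_subtree /leaf_swap.
  suff -> : core e [set x] = set0 by rewrite eqxx.
  by apply/setP => u; rewrite !inE; case: eqP => // ->; move: leaf_x; rewrite !inE => /negbTE.
have lt_sum : \sum_(S in subtrees e) (2 * (#|S| + #|subtree_swap e S|) + 2)
              < \sum_(S in subtrees e) 3 * #|T|.
  apply: (ltn_sum_at (a := [set x])) => [|| S]; first by rewrite inE.
    by rewrite swap_leaf cards1; have := cardsC (internals e); lia.
  by rewrite inE /subtree_swap => subtree_S; rewrite subtree_S leaf_swap_card_bound.
rewrite big_split /= -big_distrr /= !sum_nat_const in lt_sum.
have sum_double := big_involution_double (fun S : {set T} => #|S|)
  (subtree_swapK sym_e) (subtree_swap_subtrees sym_e).
by rewrite -sum_double -mul2n mulnA (mulnC _ 2) in lt_sum.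
Qed.

End T3.

Local Open Scope ring_scope.

Theorem mainTheorem3 (T : finType) (e : rel T) :
  in_T3 e -> mu e < ((3%:R * (#|T|)%:R - 2%:R) / 4%:R : rat).
Proof.
move=> T3_e; have sizes_lt := subtree_sizes_lt T3_e.
have subtrees_gt0 : (0 < #|subtrees e|)%N by lia.
rewrite /mu ltr_pdivrMr ?ltr0n //.
by move: sizes_lt; rewrite -(ltr_nat rat) !natrD !natrM; nra.
Qed.
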